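(* Let $n\geq 1$ and let $\phi$ be a variable-free formula with modalities among $[0],\dots,[n]$. Let $\overline{\phi}$ be the formula obtained from $\phi$ by replacing every subformula of the form $[n]\psi$ by $\top$. If $\mathbf{GLP}\nvdash\langle n\rangle\top\to\neg[0]\phi$, then $\mathbf{GLP}\nvdash\langle n\rangle\top\to\neg[0]\overline{\phi}$.
   Context: $\mathbf{GLP}$ is the propositional polymodal logic with modalities $[0],[1],\dots$ ($\langle k\rangle:=\neg[k]\neg$) axiomatized by classical tautologies; $[k](\phi\to\psi)\to([k]\phi\to[k]\psi)$; $[k]([k]\phi\to\phi)\to[k]\phi$; $\langle j\rangle\phi\to[k]\langle j\rangle\phi$ for $j<k$; $[j]\phi\to[k]\phi$ for $j\leq k$; rules modus ponens and necessitation. Variable-free formulas are built from $\top,\bot$ by boolean connectives and modalities. *)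

From Stdlib Require Import Arith Bool.

Inductive form : Type :=
| Var : nat -> form
| Bot : form
| Imp : form -> form -> form
| Box : nat -> form -> form.

Definition Neg (a : form) : form := Imp a Bot.
Definition Top : form := Neg Bot.
Definition Dia (k : nat) (a : form) : form := Neg (Box k (Neg a)).

(* Classical tautologies: formulas true under every boolean assignment to
   their propositional atoms, where variables and boxed formulas [k]a are
   treated as atoms. *)
Fixpoint eval (v : form -> bool) (a : form) : bool :=
  match a with
  | Var _ => v a
  | Bot => false
  | Imp b c => implb (eval v b) (eval v c)
  | Box _ _ => v a
  end.

Definition tautology (a : form) : Prop := forall v : form -> bool, eval v a = true.

Inductive GLP_prv : form -> Prop :=
| GLP_taut : forall a, tautology a -> GLP_prv a
| GLP_K : forall k a b, GLP_prv (Imp (Box k (Imp a b)) (Imp (Box k a) (Box k b)))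
| GLP_Lob : forall k a, GLP_prv (Imp (Box k (Imp (Box k a) a)) (Box k a))
| GLP_dia : forall j k a, j < k -> GLP_prv (Imp (Dia j a) (Box k (Dia j a)))
| GLP_mono : forall j k a, j <= k -> GLP_prv (Imp (Box j a) (Box k a))
| GLP_mp : forall a b, GLP_prv (Imp a b) -> GLP_prv a -> GLP_prv b
| GLP_nec : forall k a, GLP_prv a -> GLP_prv (Box k a).

Fixpoint var_free (a : form) : Prop :=
  match a with
  | Var _ => False
  | Bot => True
  | Imp b c => var_free b /\ var_free c
  | Box _ b => var_free b
  end.

Fixpoint mods_le (n : nat) (a : form) : Prop :=
  match a with
  | Var _ => True
  | Bot => True
  | Imp b c => mods_le n b /\ mods_le n c
  | Box k b => k <= n /\ mods_le n b
  end.

Fixpoint bar (n : nat) (a : form) : form :=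
  match a with
  | Var i => Var i
  | Bot => Bot
  | Imp b c => Imp (bar n b) (bar n c)
  | Box k b => if Nat.eqb k n then Top else Box k (bar n b)
  end.

(* Write β for [n]¬⊤, so that ⟨n⟩⊤ is ¬β. By induction on χ, the hypotheses β
   and [0]β prove χ ↔ χ̄: under β every [n]ψ is provable, like the ⊤ replacing
   it, and for j < n the boxes [j]β and [j][0]β (from [0]β by axiom 4 and
   monotonicity) let the induction hypothesis pass under [j]. Hence [0]β proves
   [0](φ ↔ φ̄). If [0]φ̄ → β were provable, so would be [0]φ → ([0]β → β), and
   Löb's axiom turns this into [0]φ → β, i.e. ⟨n⟩⊤ → ¬[0]φ. *)
From Stdlib Require Import Arith.

Definition Conj (a b : form) : form := Neg (Imp a (Neg b)).
Definition Equiv (a b : form) : form := Conj (Imp a b) (Imp b a).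

Ltac GLP_tauto :=
  apply GLP_taut; unfold tautology, Equiv, Conj, Dia, Top, Neg; intro v; simpl;
  repeat match goal with
         | |- context [eval ?w ?x] => destruct (eval w x)
         | |- context [?w (Box ?k ?x)] => destruct (w (Box k x))
         | |- context [?w (Var ?i)] => destruct (w (Var i))
         end; reflexivity.

(* [mp_by H] turns the goal [b] into [Imp a b], where [H : GLP_prv a]; a chain
   of them ending in [GLP_tauto] is propositional reasoning from theorems. *)
Ltac mp_by H := eapply GLP_mp; [| exact H].

Lemma GLP_box_mono k a b : GLP_prv (Imp a b) -> GLP_prv (Imp (Box k a) (Box k b)).
Proof. intro Hab. eapply GLP_mp; [apply GLP_K | exact (GLP_nec k _ Hab)]. Qed.

Lemma GLP_box_mono2 k a b c : GLP_prv (Imp a (Imp b c)) ->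
  GLP_prv (Imp (Box k a) (Imp (Box k b) (Box k c))).
Proof.
  intro Habc.
  pose proof (GLP_box_mono k _ _ Habc) as Hbox.
  pose proof (GLP_K k b c) as HK.
  mp_by HK. mp_by Hbox. GLP_tauto.
Qed.

Lemma GLP_box_equiv k a b :
  GLP_prv (Imp (Box k (Equiv a b)) (Equiv (Box k a) (Box k b))).
Proof.
  assert (Hab : GLP_prv (Imp (Box k (Equiv a b)) (Imp (Box k a) (Box k b))))
    by (apply GLP_box_mono2; GLP_tauto).
  assert (Hba : GLP_prv (Imp (Box k (Equiv a b)) (Imp (Box k b) (Box k a))))
    by (apply GLP_box_mono2; GLP_tauto).
  mp_by Hba. mp_by Hab. GLP_tauto.
Qed.

(* The classical derivation of axiom 4 from Löb's axiom, applied to [[k]a ∧ a]. *)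
Lemma GLP_box4 k a : GLP_prv (Imp (Box k a) (Box k (Box k a))).
Proof.
  set (c := Conj (Box k a) a).
  assert (Hc_a : GLP_prv (Imp (Box k c) (Box k a)))
    by (apply GLP_box_mono; unfold c; GLP_tauto).
  assert (Hc_boxa : GLP_prv (Imp (Box k c) (Box k (Box k a))))
    by (apply GLP_box_mono; unfold c; GLP_tauto).
  assert (Hrefl : GLP_prv (Imp a (Imp (Box k c) c)))
    by (mp_by Hc_a; unfold c; GLP_tauto).
  pose proof (GLP_box_mono k _ _ Hrefl) as Hbox_refl.
  pose proof (GLP_Lob k c) as HLob.
  mp_by Hc_boxa. mp_by HLob. mp_by Hbox_refl. GLP_tauto.
Qed.

Lemma GLP_Lob_under k a b :
  GLP_prv (Imp (Box k a) (Imp (Box k b) b)) -> GLP_prv (Imp (Box k a) b).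
Proof.
  intro Hrefl.
  pose proof (GLP_box_mono k _ _ Hrefl) as Hbox_refl.
  pose proof (GLP_Lob k b) as HLob.
  pose proof (GLP_box4 k a) as H4.
  mp_by Hrefl. mp_by HLob. mp_by H4. mp_by Hbox_refl. GLP_tauto.
Qed.

Section Bar.
Variable n : nat.
Let beta := Box n (Neg Top).

Lemma bar_equiv chi : mods_le n chi ->
  GLP_prv (Imp beta (Imp (Box 0 beta) (Equiv chi (bar n chi)))).
Proof.
  induction chi as [i| |a IHa b IHb|j a IHa]; simpl; intro Hmods.
  - GLP_tauto.
  - GLP_tauto.
  - destruct Hmods as [Ha Hb].
    specialize (IHa Ha). specialize (IHb Hb).
    mp_by IHb. mp_by IHa. GLP_tauto.
  - destruct Hmods as [_ Ha]. specialize (IHa Ha).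
    destruct (Nat.eq_dec j n) as [-> | Hjn].
    + rewrite Nat.eqb_refl.
      assert (Hbox_n : GLP_prv (Imp beta (Box n a)))
        by (apply GLP_box_mono; GLP_tauto).
      mp_by Hbox_n. GLP_tauto.
    + rewrite (proj2 (Nat.eqb_neq j n) Hjn).
      pose proof (GLP_box_mono2 j _ _ _ IHa) as Hbox_IH.
      pose proof (GLP_mono 0 j beta (Nat.le_0_l j)) as Hbox_beta.
      pose proof (GLP_box4 0 beta) as H4.
      pose proof (GLP_mono 0 j (Box 0 beta) (Nat.le_0_l j)) as Hbox_box0_beta.
      pose proof (GLP_box_equiv j a (bar n a)) as Hequiv.
      mp_by Hequiv. mp_by Hbox_box0_beta. mp_by H4. mp_by Hbox_beta. mp_by Hbox_IH.
      GLP_tauto.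
Qed.

Lemma box0_bar_equiv chi : mods_le n chi ->
  GLP_prv (Imp (Box 0 beta) (Equiv (Box 0 chi) (Box 0 (bar n chi)))).
Proof.
  intro Hmods.
  pose proof (GLP_box_mono2 0 _ _ _ (bar_equiv chi Hmods)) as Hbox.
  pose proof (GLP_box4 0 beta) as H4.
  pose proof (GLP_box_equiv 0 chi (bar n chi)) as Hequiv.
  mp_by Hequiv. mp_by H4. mp_by Hbox. GLP_tauto.
Qed.

End Bar.

Theorem mainTheorem20 (n : nat) (phi : form) :
  1 <= n -> var_free phi -> mods_le n phi ->
  ~ GLP_prv (Imp (Dia n Top) (Neg (Box 0 phi))) ->
  ~ GLP_prv (Imp (Dia n Top) (Neg (Box 0 (bar n phi)))).
Proof.
  intros _ _ Hmods Hphi Hbar. apply Hphi.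
  pose proof (box0_bar_equiv n phi Hmods) as Hequiv.
  assert (Hrefl : GLP_prv (Imp (Box 0 phi)
                     (Imp (Box 0 (Box n (Neg Top))) (Box n (Neg Top)))))
    by (mp_by Hbar; mp_by Hequiv; GLP_tauto).
  pose proof (GLP_Lob_under 0 _ _ Hrefl) as Hbeta.
  mp_by Hbeta. GLP_tauto.
Qed.
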